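(* Let $n\ge1$ and $A=(a_{i,j})\in\Theta_\vartriangle(n)$. Then $$\|A\|=\sum_{1\le i\le n,\ i<j}\sigma_{i,j}(A)+\sum_{1\le i\le n,\ i>j}\sigma_{i,j}(A),$$ where $j$ ranges over $\mathbb Z$. In particular, if $A,B\in\Theta_\vartriangle(n)$ satisfy $A\prec B$, then $\|A\|<\|B\|$.
   Context: $\Theta_\vartriangle(n)$ is the set of matrices $A=(a_{i,j})_{i,j\in\mathbb Z}$ with $a_{i,j}\in\mathbb N$, $a_{i+n,j+n}=a_{i,j}$, and for each $i$ only finitely many nonzero $a_{i,j}$. Define $\|A\|=\sum_{1\le i\le n,\,i<j}\frac{(j-i)(j-i+1)}{2}a_{i,j}+\sum_{1\le i\le n,\,i>j}\frac{(i-j)(i-j+1)}{2}a_{i,j}$. For $i\ne j$ put $\sigma_{i,j}(A)=\sum_{s\le i,\ t\ge j}a_{s,t}$ if $i<j$ and $\sigma_{i,j}(A)=\sum_{s\ge i,\ t\le j}a_{s,t}$ if $i>j$. Write $B\preceq A$ if $\sigma_{i,j}(B)\le\sigma_{i,j}(A)$ for all $i\ne j$, and $B\prec A$ if $B\preceq A$ and $\sigma_{i,j}(B)<\sigma_{i,j}(A)$ for some $i\ne j$. *)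

From mathcomp Require Import all_boot all_order all_algebra.
From mathcomp Require Import boolp classical_sets cardinality fsbigop.
Set Implicit Arguments. Unset Strict Implicit. Unset Printing Implicit Defensive.
Import Order.TTheory GRing.Theory Num.Theory.
Local Open Scope classical_set_scope.
Local Open Scope ring_scope.

Definition zmat := int -> int -> nat.

Definition Theta (n : nat) (A : zmat) : Prop :=
  (forall i j : int, A (i + n%:Z) (j + n%:Z) = A i j) /\
  (forall i : int, finite_set [set j : int | A i j != 0%N]).

Definition tri (i j : int) : nat := ((`|j - i|%N * (`|j - i|%N).+1) %/ 2)%N.

Definition mnorm (n : nat) (A : zmat) : nat :=
  (\sum_(p \in [set p : int * int | (1 <= p.1 <= n%:Z) && (p.1 < p.2)])
      (tri p.1 p.2 * A p.1 p.2)%N)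
  + (\sum_(p \in [set p : int * int | (1 <= p.1 <= n%:Z) && (p.2 < p.1)])
      (tri p.1 p.2 * A p.1 p.2)%N).

(* sigma_{i,j}(A); only meaningful for i != j. *)
Definition sigma (A : zmat) (i j : int) : nat :=
  if i < j then \sum_(p \in [set p : int * int | (p.1 <= i) && (j <= p.2)]) A p.1 p.2
  else \sum_(p \in [set p : int * int | (i <= p.1) && (p.2 <= j)]) A p.1 p.2.

Definition mpreceq (B A : zmat) : Prop :=
  forall i j : int, i != j -> (sigma B i j <= sigma A i j)%N.

Definition mprec (B A : zmat) : Prop :=
  mpreceq B A /\ exists i j : int, i != j /\ (sigma B i j < sigma A i j)%N.

(* Exchanging the order of summation, sum_{j>i} sigma_{i,j}(A) counts each entry
   a_{s,t} with s <= i < t exactly t - i times.  Parametrise the quadrant of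
   sigma_{k,k+d} by its points (k-u, k-u+e) with u >= 0 and e >= d+u: after moving
   row k-u back into the period 1..n by periodicity, a_{k,k+e} is counted once for
   every pair (d,u) with d >= 1 and d+u <= e, i.e. C(e+1,2) = e(e+1)/2 times, which
   is its weight in ||A||; the part below the diagonal is symmetric.  Periodicity
   and row-finiteness confine the support of A to a band |t-s| <= D, so every sum
   involved is finite.  Finally sigma is periodic along the diagonal, so a strict
   inequality sigma_{i,j}(A) < sigma_{i,j}(B) can be moved to a row 1 <= i <= n,
   where it appears as a summand of ||A|| resp. ||B||. *)

From mathcomp Require Import all_boot all_order all_algebra.
From mathcomp Require Import boolp classical_sets cardinality fsbigop.
From mathcomp Require Import zify.
From mathcomp Require finmap.
Set Implicit Arguments. Unset Strict Implicit. Unset Printing Implicit Defensive.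
Import Order.TTheory GRing.Theory Num.Theory.
Local Open Scope classical_set_scope.
Local Open Scope ring_scope.

Lemma fsbig_allpairs (R : nmodType) (I J : eqType) (T : choiceType)
    (P : pred T) (F : T -> R) (s : seq I) (t : seq J) (g : I -> J -> T) :
  uniq s -> uniq t ->
  (forall x y x' y', g x y = g x' y' -> x = x' /\ y = y') ->
  (forall p, P p -> F p != 0 ->
     exists x y, [/\ x \in s, y \in t & p = g x y]) ->
  \sum_(p \in [set p | P p]) F p =
  \sum_(x <- s) \sum_(y <- t) (if P (g x y) then F (g x y) else 0).
Proof.
move=> s_uniq t_uniq g_inj F_supp.
rewrite -[[set p | P p]]/[set` P].
rewrite -(bigfs _ (r := [seq g x y | x <- s, y <- t])); last first.
- move=> p Pp; apply: contraNeq => /(F_supp p Pp) [x [y [xs yt ->]]].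
  exact: allpairs_f.
- apply: allpairs_uniq => // [[x y]] [x' y'] _ _ /= /g_inj [-> ->] //.
by rewrite big_mkcond big_allpairs_dep.
Qed.

Lemma int_step_invariant (T : Type) (f : int -> T) :
  (forall z, f (z + 1) = f z) -> forall z, f z = f 0.
Proof.
move=> f_step; elim/int_rec => // m IHm.
  by rewrite -addn1 PoszD f_step.
by rewrite -IHm -f_step; congr f; lia.
Qed.

Lemma periodic_sum_shift (R : nmodType) (n : nat) (G : int -> R) :
  (forall x, G (x + n%:Z) = G x) ->
  forall z, \sum_(1 <= k < n.+1) G (k%:Z + z) = \sum_(1 <= k < n.+1) G k%:Z.
Proof.
move=> G_per.
have shift1 w : \sum_(1 <= k < n.+1) G (k%:Z + (w + 1))
              = \sum_(1 <= k < n.+1) G (k%:Z + w).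
  case: n G_per => [|n] G_per; first by rewrite !big_geq.
  rewrite big_nat_recr // [RHS]big_nat_recl // addrC.
  congr (_ + _); last by rewrite -[RHS]G_per; congr G; lia.
  by apply: eq_bigr => k _; congr G; lia.
move=> z; rewrite (int_step_invariant shift1 z).
by apply: eq_bigr => k _; rewrite addr0.
Qed.

Lemma leq_sum_seq (I : eqType) (r : seq I) (F G : I -> nat) :
  {in r, forall i, F i <= G i}%N -> (\sum_(i <- r) F i <= \sum_(i <- r) G i)%N.
Proof. by move=> leFG; rewrite big_seq [X in (_ <= X)%N]big_seq leq_sum. Qed.

Lemma ltn_sum_seq (I : eqType) (r : seq I) (F G : I -> nat) :
  {in r, forall i, F i <= G i}%N -> (exists2 i, i \in r & F i < G i)%N ->
  (\sum_(i <- r) F i < \sum_(i <- r) G i)%N.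
Proof.
move=> leFG [i ir ltFG]; rewrite big_seq [X in (_ < X)%N]big_seq.
rewrite -subn_gt0 -sumnB; last by move=> j /leFG.
rewrite lt0n sum_nat_seq_neq0; apply/hasP; exists i => //.
by rewrite ir subn_eq0 -ltnNge.
Qed.

Lemma finite_int_set_bounded (S : set int) : finite_set S ->
  exists M : nat, forall j, S j -> (`|j| <= M)%N.
Proof.
move=> /finite_fsetP [X SX]; exists (\max_(j <- finmap.enum_fset X) `|j|)%N.
move=> j Sj; have jX : j \in finmap.enum_fset X by move: Sj; rewrite SX.
exact: leq_bigmax_seq.
Qed.

Lemma sum_indicator_addn_leq (d e D : nat) :
  (\sum_(0 <= u < D) (d + u <= e) = minn D (e.+1 - d))%N.
Proof.
elim: D => [|D IHD]; first by rewrite big_geq // min0n.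
by rewrite big_nat_recr //= IHD; case: leqP => ?; lia.
Qed.

Lemma sum_pairs_addn_leq (D e : nat) : (e <= D)%N ->
  (\sum_(1 <= d < D.+1) \sum_(0 <= u < D) (d + u <= e) = 'C(e.+1, 2))%N.
Proof.
move=> e_le.
transitivity (\sum_(1 <= d < D.+1) (e.+1 - d))%N.
  by apply: eq_big_nat => d /andP [d_ge1 _]; rewrite sum_indicator_addn_leq; lia.
rewrite (big_cat_nat _ (n := e.+1)) //= [X in (_ + X)%N]big_nat_cond.
rewrite [X in (_ + X)%N]big1 ?addn0; last by move=> d /andP [/andP [? _] _]; lia.
rewrite big_nat_rev -bin2_sum [RHS]big_ltn // add0n.
by apply: eq_big_nat => d /andP [_ d_le]; lia.
Qed.

Definition band (A : zmat) (D : nat) : Prop :=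
  forall s t, A s t != 0%N -> (`|t - s| <= D)%N.

Definition step (up : bool) (i : int) (d : nat) : int :=
  if up then i + d%:Z else i - d%:Z.

Definition strip (n : nat) (up : bool) : set (int * int) :=
  [set p | (1 <= p.1 <= n%:Z) && (if up then p.1 < p.2 else p.2 < p.1)].

Lemma int_period_decomp (n : nat) (i : int) : (0 < n)%N ->
  exists (k : nat) (q : int), [/\ (1 <= k <= n)%N & i = k%:Z + q * n%:Z].
Proof.
move=> n_gt0; have n_neq0 : n%:Z != 0 by rewrite eqz_nat -lt0n.
have r_ge0 : 0 <= ((i - 1) %% n%:Z)%Z by apply: modz_ge0.
have r_lt : ((i - 1) %% n%:Z)%Z < n%:Z by apply: ltz_pmod; rewrite ltz_nat.
have := divz_eq (i - 1) n%:Z.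
by exists (absz (((i - 1) %% n%:Z)%Z + 1)), ((i - 1) %/ n%:Z)%Z; split; lia.
Qed.

Lemma Theta_shift (n : nat) (A : zmat) : Theta n A ->
  forall (q : int) s t, A (s + q * n%:Z) (t + q * n%:Z) = A s t.
Proof.
move=> [A_per _] q s t.
have shift1 r : A (s + (r + 1) * n%:Z) (t + (r + 1) * n%:Z)
              = A (s + r * n%:Z) (t + r * n%:Z).
  by rewrite mulrDl mul1r !addrA A_per.
by rewrite (int_step_invariant shift1 q) !mul0r !addr0.
Qed.

Lemma rows_bounded (A : zmat) :
  (forall i, finite_set [set j | A i j != 0%N]) ->
  forall m : nat, exists M : nat,
    forall (k : nat) j, (k <= m)%N -> A k%:Z j != 0%N -> (`|j| <= M)%N.
Proof.
move=> rows_fin; elim=> [|m [M rowsM]].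
  have [M rowM] := finite_int_set_bounded (rows_fin 0).
  by exists M => k j; rewrite leqn0 => /eqP ->; apply: rowM.
have [M' rowM'] := finite_int_set_bounded (rows_fin m.+1%:Z).
exists (maxn M M') => k j; rewrite leq_eqVlt => /orP [/eqP -> | k_le] Akj.
  exact: leq_trans (rowM' j Akj) (leq_maxr _ _).
exact: leq_trans (rowsM k j k_le Akj) (leq_maxl _ _).
Qed.

Lemma Theta_band (n : nat) (A : zmat) : (0 < n)%N -> Theta n A ->
  exists D, band A D.
Proof.
move=> n_gt0 A_Theta; have [M rowsM] := rows_bounded A_Theta.2 n.
exists (M + n)%N => s t Ast.
have [k [q [/andP [_ k_le] s_eq]]] := int_period_decomp s n_gt0.
move: Ast; rewrite s_eq -[t](subrK (q * n%:Z)) (Theta_shift A_Theta).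
by move=> /(rowsM _ _ k_le); lia.
Qed.

Lemma band_leq (A : zmat) (D D' : nat) : band A D -> (D <= D')%N -> band A D'.
Proof. by move=> A_band le_DD' s t /A_band /leq_trans; apply. Qed.

Lemma fsbig_strip (R : nmodType) (n D : nat) (up : bool) (F : int * int -> R) :
  (forall p, strip n up p -> F p != 0 -> (`|p.2 - p.1| <= D)%N) ->
  \sum_(p \in strip n up) F p
  = \sum_(1 <= k < n.+1) \sum_(1 <= d < D.+1) F (k%:Z, step up k%:Z d).
Proof.
move=> F_supp; rewrite /strip (fsbig_allpairs _ _ (s := index_iota 1 n.+1)
  (t := index_iota 1 D.+1) (g := fun k d => (k%:Z, step up k%:Z d))).
- apply: eq_big_nat => k /andP [k_ge1 k_le]; apply: eq_big_nat => d /andP [d_ge1 _].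
  by rewrite ifT //= /step; case: (up); lia.
- exact: iota_uniq.
- exact: iota_uniq.
- by move=> k d k' d' []; rewrite /step; case: (up); lia.
- move=> [i j] /= strip_ij /(F_supp (i, j) strip_ij) /= ji_le.
  exists `|i|%N, `|j - i|%N; rewrite !mem_index_iota /step.
  by move: strip_ij; case: (up) => /andP [/andP [? ?] ?]; split; try congr pair; lia.
Qed.

Lemma tri_stepE (up : bool) (k : int) (e : nat) :
  tri k (step up k e) = 'C(e.+1, 2).
Proof.
rewrite /tri bin2 -divn2 mulnC.
by have -> : `|step up k e - k|%N = e by rewrite /step; case: up; lia.
Qed.

Section BandedMatrix.

Variables (A : zmat) (D : nat).
Hypothesis A_band : band A D.

Lemma sigma_eq0 (i j : int) : (D < `|j - i|)%N -> sigma A i j = 0%N.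
Proof.
move=> far; rewrite /sigma; case: ifP => ij; apply: fsbig1 => -[s t] /= /andP [? ?];
  by apply/eqP; apply: contraLR far => /A_band; rewrite -leqNgt; lia.
Qed.

Lemma sigma_support (i j : int) : sigma A i j != 0 -> (`|j - i| <= D)%N.
Proof.
move=> nz; rewrite leqNgt; apply: contra nz => far.
by rewrite (sigma_eq0 far).
Qed.

Lemma sigma_stepE (up : bool) (i : int) (d : nat) : (0 < d)%N ->
  sigma A i (step up i d)
  = \sum_(0 <= u < D) \sum_(1 <= e < D.+1)
      ((d + u <= e)%N * A (step (~~ up) i u) (step up (step (~~ up) i u) e))%N.
Proof.
move=> d_gt0.
have -> : sigma A i (step up i d) = \sum_(p \in [set p | if up
      then (p.1 <= i) && (step up i d <= p.2)
      else (i <= p.1) && (p.2 <= step up i d)]) A p.1 p.2.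
  by rewrite /sigma /step; case: up; [rewrite ifT | rewrite ifF] => //; lia.
rewrite (fsbig_allpairs _ _ (s := index_iota 0 D) (t := index_iota 1 D.+1)
  (g := fun u e => (step (~~ up) i u, step up (step (~~ up) i u) e))).
- apply: eq_big_nat => u _; apply: eq_big_nat => e _ /=.
  rewrite /step; case: up => /=; case: leqP => ?;
    by rewrite ?mul1n ?mul0n; case: ifP => //; lia.
- exact: iota_uniq.
- exact: iota_uniq.
- by move=> u e u' e' []; rewrite /step; case: up => /=; lia.
- move=> [s t] /= in_quadrant /A_band ts_le.
  exists `|i - s|%N, `|t - s|%N; rewrite !mem_index_iota /step.
  by move: in_quadrant; case: up => /= /andP [? ?]; split; try congr pair; lia.
Qed.

End BandedMatrix.

Lemma sigma_shift (n D : nat) (A : zmat) : Theta n A -> band A D ->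
  forall (q : int) (i j : int), i != j ->
  sigma A (i + q * n%:Z) (j + q * n%:Z) = sigma A i j.
Proof.
move=> A_Theta A_band q i j ij.
have [up j_eq] : exists up, j = step up i `|j - i|%N.
  by exists (i < j); rewrite /step; case: ltgtP ij; lia.
have : (0 < `|j - i|)%N by lia.
move: (`|j - i|%N) j_eq => d -> d_gt0.
have -> : step up i d + q * n%:Z = step up (i + q * n%:Z) d.
  by rewrite /step; case: (up); lia.
rewrite !(sigma_stepE A_band) //; apply: eq_bigr => u _; apply: eq_bigr => e _.
congr (_ * _)%N; rewrite -[RHS](Theta_shift A_Theta q).
by congr A; rewrite /step; case: (up) => /=; lia.
Qed.

Lemma strip_sigma_sumE (n D : nat) (A : zmat) (up : bool) : band A D ->
  \sum_(p \in strip n up) sigma A p.1 p.2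
  = \sum_(1 <= k < n.+1) \sum_(1 <= d < D.+1) sigma A k%:Z (step up k%:Z d).
Proof. by move=> A_band; apply: fsbig_strip => p _; apply: sigma_support. Qed.

Lemma sum_shifted_rows (n D : nat) (G : nat -> int -> nat) (z : nat -> int) :
  (forall e x, G e (x + n%:Z) = G e x) ->
  \sum_(1 <= k < n.+1) \sum_(1 <= d < D.+1) \sum_(0 <= u < D) \sum_(1 <= e < D.+1)
      ((d + u <= e)%N * G e (k%:Z + z u)%R)%N
  = \sum_(1 <= k < n.+1) \sum_(1 <= e < D.+1) ('C(e.+1, 2) * G e k%:Z)%N.
Proof.
move=> G_per.
rewrite exchange_big /=.
under eq_bigr => d _.
  rewrite exchange_big /=.
  under eq_bigr => u _.
    rewrite exchange_big /=.
    under eq_bigr => e _ do rewrite -mulr_sumr (periodic_sum_shift (G_per e)).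
  over.
over.
rewrite [RHS]exchange_big /=.
under eq_bigr => d _ do rewrite exchange_big /=.
rewrite exchange_big /=; apply: eq_big_nat => e /andP [_ e_le].
rewrite -mulr_sumr -(@sum_pairs_addn_leq D e); last lia.
by rewrite mulr_suml; apply: eq_bigr => d _; rewrite mulr_suml.
Qed.

Lemma strip_sum_tri_sigma (n D : nat) (A : zmat) (up : bool) :
  Theta n A -> band A D ->
  \sum_(p \in strip n up) (tri p.1 p.2 * A p.1 p.2)%N
  = \sum_(p \in strip n up) sigma A p.1 p.2.
Proof.
move=> [A_per _] A_band.
have tri_supp p : strip n up p -> (tri p.1 p.2 * A p.1 p.2)%N != 0 ->
    (`|p.2 - p.1| <= D)%N.
  by move=> _; rewrite muln_eq0 negb_or => /andP [_ /A_band].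
rewrite (fsbig_strip tri_supp) (strip_sigma_sumE _ _ A_band).
under eq_bigr => k _ do under eq_bigr => e _ do rewrite tri_stepE.
symmetry; etransitivity; last apply: (@sum_shifted_rows n D
  (fun e x => A x (step up x e)) (step (~~ up) 0)).
  apply: eq_bigr => k _; apply: eq_big_nat => d /andP [d_gt0 _].
  rewrite (sigma_stepE A_band up _ d_gt0); apply: eq_bigr => u _.
  by apply: eq_bigr => e _; congr (_ * A _ _)%N;
    rewrite /step; case: (up) => /=; lia.
by move=> e x; rewrite -[RHS]A_per /step; case: (up); congr A; lia.
Qed.

Lemma mnorm_sigma_strips (n : nat) (A : zmat) : (0 < n)%N -> Theta n A ->
  mnorm n A = (\sum_(p \in strip n true) sigma A p.1 p.2
               + \sum_(p \in strip n false) sigma A p.1 p.2)%N.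
Proof.
move=> n_gt0 A_Theta; have [D A_band] := Theta_band n_gt0 A_Theta.
by rewrite -!(strip_sum_tri_sigma _ A_Theta A_band).
Qed.

Lemma mpreceq_sigma_step (A B : zmat) (up : bool) (k : int) (d : nat) :
  mpreceq A B -> (0 < d)%N ->
  (sigma A k (step up k d) <= sigma B k (step up k d))%N.
Proof. by move=> A_le_B d_gt0; apply: A_le_B; rewrite /step; case: (up); lia. Qed.

Lemma strip_sigma_sum_le (n D : nat) (A B : zmat) (up : bool) :
  band A D -> band B D -> mpreceq A B ->
  (\sum_(p \in strip n up) sigma A p.1 p.2
   <= \sum_(p \in strip n up) sigma B p.1 p.2)%N.
Proof.
move=> A_band B_band A_le_B.
rewrite (strip_sigma_sumE _ _ A_band) (strip_sigma_sumE _ _ B_band).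
apply: leq_sum_seq => k _; apply: leq_sum_seq => d.
by rewrite mem_index_iota => /andP [d_gt0 _]; apply: mpreceq_sigma_step.
Qed.

Lemma strip_sigma_sum_lt (n D : nat) (A B : zmat) :
  (0 < n)%N -> Theta n A -> Theta n B -> band A D -> band B D -> mprec A B ->
  exists up, (\sum_(p \in strip n up) sigma A p.1 p.2
              < \sum_(p \in strip n up) sigma B p.1 p.2)%N.
Proof.
move=> n_gt0 A_Theta B_Theta A_band B_band [A_le_B [i [j [ij lt_ij]]]].
have [k [q [k_range i_eq]]] := int_period_decomp i n_gt0.
have [up j_eq] : exists up, j = step up i `|j - i|%N.
  by exists (i < j); rewrite /step; case: ltgtP ij; lia.
have d_range : (1 <= `|j - i| <= D)%N.
  rewrite (sigma_support B_band) ?andbT; first lia.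
  by rewrite -lt0n; apply: leq_ltn_trans lt_ij.
move: (`|j - i|%N) d_range j_eq => d d_range j_eq.
have k_neq : k%:Z != step up k%:Z d by rewrite /step; case: (up); lia.
have j_shift : j = step up k%:Z d + q * n%:Z.
  by rewrite j_eq i_eq /step; case: (up); lia.
move: lt_ij; rewrite i_eq j_shift (sigma_shift A_Theta A_band _ k_neq).
rewrite (sigma_shift B_Theta B_band _ k_neq) => lt_kd.
exists up; rewrite (strip_sigma_sumE _ _ A_band) (strip_sigma_sumE _ _ B_band).
apply: ltn_sum_seq => [k' _ | ]; first apply: leq_sum_seq => d'.
  by rewrite mem_index_iota => /andP [d'_gt0 _]; apply: mpreceq_sigma_step.
exists k; first by rewrite mem_index_iota; lia.
apply: ltn_sum_seq => [d' | ].
  by rewrite mem_index_iota => /andP [d'_gt0 _]; apply: mpreceq_sigma_step.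
by exists d; first by rewrite mem_index_iota; lia.
Qed.

Lemma mnorm_lt (n : nat) (A B : zmat) : (0 < n)%N -> Theta n A -> Theta n B ->
  mprec A B -> (mnorm n A < mnorm n B)%N.
Proof.
move=> n_gt0 A_Theta B_Theta A_prec_B.
have [DA A_band] := Theta_band n_gt0 A_Theta.
have [DB B_band] := Theta_band n_gt0 B_Theta.
have A_band' := band_leq A_band (leq_maxl DA DB).
have B_band' := band_leq B_band (leq_maxr DA DB).
have [up lt_up] := strip_sigma_sum_lt n_gt0 A_Theta B_Theta A_band' B_band' A_prec_B.
have le_other := strip_sigma_sum_le n (~~ up) A_band' B_band' A_prec_B.1.
rewrite !mnorm_sigma_strips //.
case: up lt_up le_other => /= lt_strip le_strip.
  by rewrite -addSn; apply: leq_add.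
by rewrite -addnS; apply: leq_add.
Qed.

Theorem lemma3p7p6 (n : nat) : (1 <= n)%N ->
  (forall A : zmat, Theta n A ->
     mnorm n A =
       (\sum_(p \in [set p : int * int | (1 <= p.1 <= n%:Z) && (p.1 < p.2)])
           sigma A p.1 p.2)
       + (\sum_(p \in [set p : int * int | (1 <= p.1 <= n%:Z) && (p.2 < p.1)])
           sigma A p.1 p.2)) /\
  (forall A B : zmat, Theta n A -> Theta n B -> mprec A B ->
     (mnorm n A < mnorm n B)%N).
Proof.
move=> n_gt0; split=> [A | A B]; first exact: mnorm_sigma_strips.
exact: mnorm_lt.
Qed.
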